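(* Assume the setting of the context. Then $C^{-1}\le\rho(t,x)\le C$ for all $x\in\mathbb{T}^3$ and $0\le t<\overline{T}$, where $C>0$ depends only on $(\rho_0,u_0)$, $C_0$ and $\overline{T}$.
   Context: Parameters: $\gamma>1$, $0<\delta<1$, $\alpha>0$, $A>0$, $\beta=2\alpha(\delta-1)$ with $\alpha+\beta\ge0$. System on the torus $\mathbb{T}^3$: $\rho_t+\mathrm{div}(\rho u)=0$, $(\rho u)_t+\mathrm{div}(\rho u\otimes u)+\nabla(A\rho^\gamma)=\mathrm{div}(2\alpha\rho^\delta D(u)+\beta\rho^\delta\mathrm{div}u\,\mathbb{I}_3)$, $D(u)=\frac12(\nabla u+(\nabla u)^\top)$, $(\rho,u)|_{t=0}=(\rho_0,u_0)$ with $\rho_0>0$, $(\rho_0,u_0)\in H^3(\mathbb{T}^3)$. $(\rho,u)$ is the unique classical solution with $\rho\in C([0,T];H^3)$, $u\in C([0,T];H^3)\cap L^2([0,T];H^4)$ on each $[0,T]$ of existence, with maximal existence time $\overline{T}<\infty$, and it is assumed that $\lim_{T\to\overline{T}}\int_0^T\|D(u)(t)\|^2_{L^\infty(\mathbb{T}^3)}dt=C_0<\infty$. *)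

From Stdlib Require Import Reals.
From Coquelicot Require Import Coquelicot.
Open Scope R_scope.

(* A space-time scalar field: f t x1 x2 x3.  Points of T^3 are represented by
   points of R^3 and functions are required to be 1-periodic in each x_i. *)
Definition sf := R -> R -> R -> R -> R.
(* A vector field is given by its components u 0, u 1, u 2. *)
Definition vf := nat -> sf.

Definition sum3 (F : nat -> R) : R := F 0%nat + F 1%nat + F 2%nat.
Definition kron (i j : nat) : R := if Nat.eqb i j then 1 else 0.

Definition dt (f : sf) : sf := fun t x y z => Derive (fun s => f s x y z) t.
Definition dx (i : nat) (f : sf) : sf := fun t x y z =>
  match i with
  | 0%nat => Derive (fun s => f t s y z) x
  | 1%nat => Derive (fun s => f t x s z) y
  | _ => Derive (fun s => f t x y s) z
  end.
Definition ex_dx (i : nat) (f : sf) (t x y z : R) : Prop :=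
  match i with
  | 0%nat => ex_derive (fun s => f t s y z) x
  | 1%nat => ex_derive (fun s => f t x s z) y
  | _ => ex_derive (fun s => f t x y s) z
  end.

Definition cont_on (P : R -> Prop) (f : sf) : Prop :=
  forall t x y z, P t -> forall eps : posreal, exists del : posreal,
    forall t' x' y' z', P t' ->
      Rabs (t' - t) < del -> Rabs (x' - x) < del -> Rabs (y' - y) < del ->
      Rabs (z' - z) < del -> Rabs (f t' x' y' z' - f t x y z) < eps.

Definition periodic (f : sf) : Prop :=
  forall t x y z, f t (x + 1) y z = f t x y z /\ f t x (y + 1) z = f t x y z
                  /\ f t x y (z + 1) = f t x y z.

Definition Dsym (u : vf) (i j : nat) : sf := fun t x y z =>
  (dx j (u i) t x y z + dx i (u j) t x y z) / 2.
Definition divu (u : vf) : sf := fun t x y z => sum3 (fun i => dx i (u i) t x y z).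

Definition normD (u : vf) : sf := fun t x y z =>
  sqrt (sum3 (fun i => sum3 (fun j => (Dsym u i j t x y z) ^ 2))).
Definition LinfD (u : vf) (t : R) : Rbar :=
  Lub_Rbar (fun r => exists x y z, r = normD u t x y z).

(* Classical-regularity solution of the degenerate compressible Navier-Stokes
   system on [0,T) x T^3 with initial data (rho0,u0). *)
Definition cns_solution (gam del alp A bet : R)
  (rho0 : R -> R -> R -> R) (u0 : nat -> R -> R -> R -> R)
  (T : R) (rho : sf) (u : vf) : Prop :=
  let I0 := fun t => 0 <= t < T in
  let I := fun t => 0 < t < T in
  periodic rho /\ (forall i, (i < 3)%nat -> periodic (u i)) /\
  (forall t x y z, I0 t -> 0 < rho t x y z) /\
  (forall x y z, rho 0 x y z = rho0 x y z) /\
  (forall i x y z, (i < 3)%nat -> u i 0 x y z = u0 i x y z) /\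
  cont_on I0 rho /\ (forall i, (i < 3)%nat -> cont_on I0 (u i)) /\
  (forall i, (i < 3)%nat ->
     (forall t x y z, I0 t -> ex_dx i rho t x y z) /\ cont_on I0 (dx i rho)) /\
  (forall i j, (i < 3)%nat -> (j < 3)%nat ->
     (forall t x y z, I0 t -> ex_dx j (u i) t x y z) /\ cont_on I0 (dx j (u i))) /\
  (forall t x y z, I t -> ex_derive (fun s => rho s x y z) t) /\ cont_on I (dt rho) /\
  (forall i, (i < 3)%nat ->
     (forall t x y z, I t -> ex_derive (fun s => u i s x y z) t) /\ cont_on I (dt (u i))) /\
  (forall i j k, (i < 3)%nat -> (j < 3)%nat -> (k < 3)%nat ->
     (forall t x y z, I t -> ex_dx k (dx j (u i)) t x y z) /\
     cont_on I (dx k (dx j (u i)))) /\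
  (forall t x y z, I t ->
     dt rho t x y z
     + sum3 (fun j => dx j (fun t x y z => rho t x y z * u j t x y z) t x y z) = 0) /\
  (forall i t x y z, (i < 3)%nat -> I t ->
     dt (fun t x y z => rho t x y z * u i t x y z) t x y z
     + sum3 (fun j => dx j (fun t x y z => rho t x y z * u i t x y z * u j t x y z) t x y z)
     + dx i (fun t x y z => A * Rpower (rho t x y z) gam) t x y z
     = sum3 (fun j => dx j (fun t x y z =>
          2 * alp * Rpower (rho t x y z) del * Dsym u i j t x y z
          + bet * Rpower (rho t x y z) del * divu u t x y z * kron i j) t x y z)).

From Stdlib Require Import Reals ZArith Lra Lia.
From Coquelicot Require Import Coquelicot.
From mathcomp Require ssreflect ssrfun ssrbool ssralg ssrnum interval classical_sets
  topology normedtype derive Rstruct Rstruct_topology.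
Open Scope R_scope.

(* At a spatial extremum of [rho] the gradient of [rho] vanishes, so the continuity
   equation reduces there to [d/dt ln rho = - div u].  Since
   [|div u| <= sqrt 3 |D(u)| <= 1/2 + 3/2 ||D(u)||_oo^2 =: g(t)], the functions
   [+- ln rho(t,x) + int_0^t g + t] cannot attain their minimum over [[0,t] x T^3] at a
   positive time (going backward in time they would strictly decrease), so they are
   bounded below by their minimum at time 0.  As [int_0^t ||D(u)||_oo^2 <= C0], this
   bounds [|ln rho|] uniformly on [[0, Tbar)]. *)

Lemma shift_by_nat (h : R -> R) :
  (forall s, h (s + 1) = h s) -> forall n x, h (x + INR n) = h x.
Proof.
  intros Hh n; induction n as [|n IH]; intros x.
  - simpl. now rewrite Rplus_0_r.
  - rewrite S_INR, <- Rplus_assoc, Hh. apply IH.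
Qed.

Lemma shift_by_int (h : R -> R) :
  (forall s, h (s + 1) = h s) -> forall k x, h (x + IZR k) = h x.
Proof.
  intros Hh k x. destruct (Z_le_gt_dec 0 k) as [Hk|Hk].
  - rewrite <- (Z2Nat.id k Hk), <- INR_IZR_INZ. apply shift_by_nat, Hh.
  - rewrite <- (shift_by_nat h Hh (Z.to_nat (- k)) (x + IZR k)).
    rewrite INR_IZR_INZ, Z2Nat.id by lia. f_equal. rewrite opp_IZR. ring.
Qed.

Lemma periodic1_reduce (h : R -> R) :
  (forall s, h (s + 1) = h s) -> forall x, exists x', 0 <= x' <= 1 /\ h x = h x'.
Proof.
  intros Hh x. destruct (archimed x) as [Hup1 Hup2].
  exists (x - IZR (up x) + 1). split; [lra|].
  rewrite <- (shift_by_int h Hh (up x - 1) (x - IZR (up x) + 1)).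
  f_equal. rewrite minus_IZR. ring.
Qed.

Definition in_cell (x y z : R) : Prop := 0 <= x <= 1 /\ 0 <= y <= 1 /\ 0 <= z <= 1.

Lemma periodic_reduce (f : sf) : periodic f -> forall t x y z,
  exists x' y' z', in_cell x' y' z' /\ f t x y z = f t x' y' z'.
Proof.
  intros Hp t x y z.
  destruct (periodic1_reduce (fun s => f t s y z) (fun s => proj1 (Hp t s y z)) x)
    as (x' & Hx & Ex).
  destruct (periodic1_reduce (fun s => f t x' s z) (fun s => proj1 (proj2 (Hp t x' s z))) y)
    as (y' & Hy & Ey).
  destruct (periodic1_reduce (fun s => f t x' y' s) (fun s => proj2 (proj2 (Hp t x' y' s))) z)
    as (z' & Hz & Ez).
  exists x', y', z'. split; [repeat split; lra | congruence].
Qed.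

Section CompactBox.
Import ssreflect ssrfun ssrbool ssralg ssrnum interval classical_sets
  topology normedtype derive Rstruct Rstruct_topology.
Import Num.Theory.

Lemma in_segmentE (a b x : R) : x \in `[a, b]%R <-> a <= x <= b.
Proof.
rewrite in_itv /=; split; first by move=> /andP[/RleP ? /RleP ?].
by move=> [/RleP -> /RleP ->].
Qed.

Lemma cont_on_attains_min (f : sf) (a b : R) : a <= b ->
  cont_on (fun t => a <= t <= b) f ->
  exists t x y z, a <= t <= b /\ in_cell x y z /\
    forall t' x' y' z', a <= t' <= b -> in_cell x' y' z' -> f t x y z <= f t' x' y' z'.
Proof.
move=> ab fc.
pose A : set (R * R * R * R) :=
  (`[a, b] `*` `[0, 1] `*` `[0, 1] `*` `[0, 1])%classic.
have inA t x y z : A (t, x, y, z) <-> a <= t <= b /\ in_cell x y z.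
  by rewrite /A /in_cell /= !in_segmentE; tauto.
pose F (p : R * R * R * R) := f p.1.1.1 p.1.1.2 p.1.2 p.2.
have A0 : (A !=set0)%classic.
  by exists (a, 0, 0, 0); apply/inA; rewrite /in_cell; lra.
have cA : compact A.
  by rewrite /A; repeat apply: compact_setX; exact: segment_compact.
have cF : {within A, continuous F}%classic.
  apply/subspace_continuousP => -[[[t x] y] z] /inA [Ht _].
  apply/(@cvgrPdist_lt _ R^o) => e /RltP e0.
  have [d Hd] := fc t x y z Ht (mkposreal e e0).
  apply/nbhs_ballP; exists (pos d); first exact/RltP/cond_pos.
  move=> [[[t' x'] y'] z'] /= [[[bt bx] b_y] bz] /inA [Ht' _].
  move: bt bx b_y bz; rewrite /ball /= => /RltP bt /RltP bx /RltP b_y /RltP bz.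
  apply/RltP; rewrite distrC.
  by apply: Hd => //; rewrite Rabs_minus_sym.
have [[[[t x] y] z] /set_mem /inA [Ht Hc] Fmin] := compact_EVT_min A0 cA cF.
exists t, x, y, z; do 2 split=> //; move=> t' x' y' z' Ht' Hc'.
by apply/RleP/(Fmin (t', x', y', z'))/mem_set/inA.
Qed.

End CompactBox.

Lemma periodic_attains_min (f : sf) (a b : R) : a <= b -> periodic f ->
  cont_on (fun t => a <= t <= b) f ->
  exists t x y z, a <= t <= b /\
    forall t' x' y' z', a <= t' <= b -> f t x y z <= f t' x' y' z'.
Proof.
  intros Hab Hper Hf.
  destruct (cont_on_attains_min f a b Hab Hf) as (t & x & y & z & Ht & _ & Hmin).
  exists t, x, y, z. split; [exact Ht|].
  intros t' x' y' z' Ht'.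
  destruct (periodic_reduce f Hper t' x' y' z') as (x'' & y'' & z'' & Hc & ->).
  now apply Hmin.
Qed.

Lemma cont_on_sub (P Q : R -> Prop) (f : sf) :
  (forall t, Q t -> P t) -> cont_on P f -> cont_on Q f.
Proof.
  intros HQP Hf t x y z Ht eps.
  destruct (Hf t x y z (HQP t Ht) eps) as [del Hdel].
  exists del. intros t' x' y' z' Ht'. apply Hdel, HQP, Ht'.
Qed.

Lemma cont_on_comp (P : R -> Prop) (h : R -> R) (f : sf) :
  (forall t x y z, P t -> continuity_pt h (f t x y z)) -> cont_on P f ->
  cont_on P (fun t x y z => h (f t x y z)).
Proof.
  intros Hh Hf t x y z Ht eps.
  destruct (proj1 (continuity_pt_locally _ _) (Hh t x y z Ht) eps) as [al Hal].
  destruct (Hf t x y z Ht al) as [del Hdel].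
  exists del. intros t' x' y' z' Ht' H1 H2 H3 H4.
  apply Hal, (Hdel t' x' y' z'); assumption.
Qed.

Lemma cont_on_plus (P : R -> Prop) (f g : sf) : cont_on P f -> cont_on P g ->
  cont_on P (fun t x y z => f t x y z + g t x y z).
Proof.
  intros Hf Hg t x y z Ht eps.
  assert (He : 0 < eps / 2) by (destruct eps; simpl; lra).
  destruct (Hf t x y z Ht (mkposreal _ He)) as [d1 Hd1].
  destruct (Hg t x y z Ht (mkposreal _ He)) as [d2 Hd2].
  exists (mkposreal _ (Rmin_pos _ _ (cond_pos d1) (cond_pos d2))); simpl.
  intros t' x' y' z' Ht' H1 H2 H3 H4.
  pose proof (Rmin_l d1 d2). pose proof (Rmin_r d1 d2).
  specialize (Hd1 t' x' y' z' Ht'). specialize (Hd2 t' x' y' z' Ht'). simpl in Hd1, Hd2.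
  replace (f t' x' y' z' + g t' x' y' z' - (f t x y z + g t x y z))
    with ((f t' x' y' z' - f t x y z) + (g t' x' y' z' - g t x y z)) by ring.
  eapply Rle_lt_trans; [apply Rabs_triang|].
  assert (Rabs (f t' x' y' z' - f t x y z) < eps / 2) by (apply Hd1; lra).
  assert (Rabs (g t' x' y' z' - g t x y z) < eps / 2) by (apply Hd2; lra).
  lra.
Qed.

Lemma cont_on_lipschitz_in_time (P : R -> Prop) (G : R -> R) (M : R) : 0 <= M ->
  (forall s s', P s -> P s' -> s <= s' -> Rabs (G s' - G s) <= M * (s' - s)) ->
  cont_on P (fun t _ _ _ => G t).
Proof.
  intros HM HG t x y z Ht eps.
  assert (Hd : 0 < eps / (M + 1)) by (apply Rdiv_lt_0_compat; [apply cond_pos | lra]).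
  exists (mkposreal _ Hd); simpl. intros t' x' y' z' Ht' H1 _ _ _.
  assert (Hlip : Rabs (G t' - G t) <= M * Rabs (t' - t)).
  { destruct (Rle_dec t t') as [Hle|Hlt].
    - rewrite (Rabs_pos_eq (t' - t)) by lra. now apply HG.
    - rewrite Rabs_minus_sym, (Rabs_minus_sym t'), (Rabs_pos_eq (t - t')) by lra.
      apply HG; auto; lra. }
  apply Rmult_lt_compat_l with (r := M + 1) in H1; [|lra].
  replace ((M + 1) * (eps / (M + 1))) with (pos eps) in H1 by (field; lra).
  pose proof (Rabs_pos (t' - t)). nra.
Qed.

Lemma ex_RInt_inner (f : R -> R) (a b c d : R) :
  a <= c <= d -> d <= b -> ex_RInt f a b -> ex_RInt f c d.
Proof.
  intros Hcd Hdb H.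
  apply (ex_RInt_Chasles_1 f c d b); [lra|].
  apply (ex_RInt_Chasles_2 f a c b); [lra|exact H].
Qed.

Lemma RInt_increment (f : R -> R) (a b c d : R) :
  a <= c <= d -> d <= b -> ex_RInt f a b -> RInt f a d - RInt f a c = RInt f c d.
Proof.
  intros Hcd Hdb H.
  rewrite <- (RInt_Chasles f a c d); [unfold plus; simpl; ring| |];
    apply (ex_RInt_inner f a b); auto; lra.
Qed.

Lemma RInt_lipschitz (f : R -> R) (a b : R) : ex_RInt f a b ->
  exists M, 0 <= M /\ forall c d, a <= c <= d -> d <= b -> Rabs (RInt f c d) <= M * (d - c).
Proof.
  intros H. destruct (ex_RInt_ub f a b H) as [M HM].
  exists (Rabs M). split; [apply Rabs_pos|]. intros c d Hcd Hdb.
  rewrite Rmult_comm. apply abs_RInt_le_const; [lra | apply (ex_RInt_inner f a b); auto |].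
  intros s Hs. eapply Rle_trans; [|apply Rle_abs]. apply HM.
  rewrite Rmin_left, Rmax_right by lra. lra.
Qed.

Lemma RInt_ge_const (f : R -> R) (a b m : R) : a <= b -> ex_RInt f a b ->
  (forall s, a < s < b -> m <= f s) -> m * (b - a) <= RInt f a b.
Proof.
  intros Hab H Hm.
  replace (m * (b - a)) with (RInt (fun _ => m) a b)
    by (rewrite RInt_const; unfold scal; simpl; unfold mult; simpl; ring).
  apply RInt_le; auto. apply ex_RInt_const.
Qed.

Lemma RInt_le_left_limit (q : R -> R) (T l : R) : (forall s, 0 <= q s) ->
  (forall t, 0 <= t < T -> ex_RInt q 0 t) ->
  filterlim (fun t => RInt q 0 t) (at_left T) (locally l) ->
  forall t, 0 <= t < T -> RInt q 0 t <= l.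
Proof.
  intros Hq Hq_int Hlim t Ht.
  change (Rbar_le (RInt q 0 t) l).
  apply (filterlim_le (F := at_left T) (fun _ => RInt q 0 t) (fun s => RInt q 0 s));
    [| apply filterlim_const | exact Hlim].
  exists (mkposreal (T - t) ltac:(lra)). intros s Hs Hs'.
  change (Rabs (s - T) < T - t) in Hs. apply Rabs_def2 in Hs.
  pose proof (RInt_increment q 0 s t s ltac:(lra) ltac:(lra) (Hq_int s ltac:(lra))).
  pose proof (RInt_ge_0 q t s ltac:(lra) (ex_RInt_inner q 0 s t s ltac:(lra) ltac:(lra)
     (Hq_int s ltac:(lra))) (fun x _ => Hq x)).
  lra.
Qed.

Lemma ex_RInt_affine (q : R -> R) (a b al be : R) : ex_RInt q a b ->
  ex_RInt (fun s => al + be * q s) a b.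
Proof.
  intros H.
  apply (ex_RInt_plus (V := R_NormedModule) (fun _ => al) (fun s => be * q s));
    [apply ex_RInt_const | apply (ex_RInt_scal (V := R_NormedModule)), H].
Qed.

Lemma RInt_affine (q : R -> R) (a b al be : R) : ex_RInt q a b ->
  RInt (fun s => al + be * q s) a b = al * (b - a) + be * RInt q a b.
Proof.
  intros H.
  rewrite (RInt_plus (V := R_CompleteNormedModule) (fun _ => al) (fun s => be * q s));
    [| apply ex_RInt_const | apply (ex_RInt_scal (V := R_NormedModule)), H].
  rewrite RInt_const, (RInt_scal (V := R_CompleteNormedModule)) by exact H.
  unfold plus, scal; simpl; unfold mult; simpl. ring.
Qed.

Lemma is_derive_min_eq0 (k : R -> R) (c l : R) :
  is_derive k c l -> (forall s, k c <= k s) -> l = 0.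
Proof.
  intros Hd Hm. apply is_derive_Reals in Hd.
  change l with (derive_pt k c (exist _ l Hd)).
  apply (deriv_minimum k (c - 1) (c + 1)); try lra.
  intros; apply Hm.
Qed.

Lemma is_derive_left_difference (k : R -> R) (t d eps : R) : is_derive k t d -> 0 < eps ->
  exists del, 0 < del /\ forall h, 0 < h < del -> k (t - h) - k t <= h * (eps - d).
Proof.
  intros Hd He. apply is_derive_Reals in Hd.
  destruct (Hd eps He) as [del Hdel].
  exists del. split; [apply cond_pos|]. intros h Hh.
  specialize (Hdel (- h) ltac:(lra) ltac:(rewrite Rabs_Ropp, Rabs_pos_eq; lra)).
  replace (t + - h) with (t - h) in Hdel by ring.
  apply Rabs_def2 in Hdel.
  assert (E : k (t - h) - k t = - h * ((k (t - h) - k t) / - h)) by (field; lra).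
  rewrite E. nra.
Qed.

Section MinimumPrinciple.

Variables (T : R) (w b : sf) (g : R -> R).
Hypothesis T_pos : 0 < T.
Hypothesis w_periodic : periodic w.
Hypothesis w_cont : cont_on (fun t => 0 <= t < T) w.
Hypothesis b_cont : cont_on (fun t => 0 < t < T) b.
Hypothesis g_int : forall t, 0 <= t < T -> ex_RInt g 0 t.
Hypothesis b_ge : forall t x y z, 0 < t < T -> - g t <= b t x y z.
Hypothesis w_dt_at_min : forall t x y z, 0 < t < T ->
  (forall x' y' z', w t x y z <= w t x' y' z') ->
  is_derive (fun s => w s x y z) t (b t x y z).

(* The extra [+ t] makes the backward decrease of [phi] at a spatial minimum strict. *)
Let G t := RInt g 0 t + t.
Let phi t x y z := w t x y z + G t.

Lemma G_increment c d : 0 <= c <= d -> d < T -> G d - G c = RInt g c d + (d - c).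
Proof.
  intros Hcd HdT. unfold G.
  rewrite <- (RInt_increment g 0 d c d Hcd (Rle_refl d) (g_int d ltac:(lra))). ring.
Qed.

Lemma phi_periodic : periodic phi.
Proof.
  intros t x y z. unfold phi.
  destruct (w_periodic t x y z) as (-> & -> & ->). auto.
Qed.

Lemma phi_cont t1 : 0 <= t1 < T -> cont_on (fun t => 0 <= t <= t1) phi.
Proof.
  intros Ht1. apply cont_on_plus.
  - apply (cont_on_sub (fun t => 0 <= t < T)); [intros t Ht; lra | exact w_cont].
  - destruct (RInt_lipschitz g 0 t1 (g_int t1 Ht1)) as (M & HM & Hlip).
    apply (cont_on_lipschitz_in_time _ G (M + 1)); [lra|].
    intros s s' Hs Hs' Hss'. rewrite G_increment by lra.
    eapply Rle_trans; [apply Rabs_triang|].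
    rewrite (Rabs_pos_eq (s' - s)) by lra.
    pose proof (Hlip s s' ltac:(lra) ltac:(lra)). lra.
Qed.

Lemma phi_no_min_at_positive_time t1 ts xs ys zs : 0 < ts <= t1 -> t1 < T ->
  ~ (forall t x y z, 0 <= t <= t1 -> phi ts xs ys zs <= phi t x y z).
Proof.
  intros Hts Ht1 Hmin.
  assert (HtsT : 0 < ts < T) by lra.
  set (d := b ts xs ys zs).
  assert (Hdt : is_derive (fun s => w s xs ys zs) ts d).
  { apply w_dt_at_min; [exact HtsT|]. intros x y z.
    specialize (Hmin ts x y z ltac:(lra)). unfold phi in Hmin. lra. }
  destruct (is_derive_left_difference _ _ _ (1/4) Hdt ltac:(lra)) as (d1 & Hd1 & Hw).
  destruct (b_cont ts xs ys zs HtsT (mkposreal (1/4) ltac:(lra))) as [d2 Hb].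
  set (h := Rmin (Rmin d1 d2) ts / 2).
  assert (Hh : 0 < h /\ h < d1 /\ h < d2 /\ h < ts).
  { unfold h. pose proof (cond_pos d2). pose proof (Rmin_l (Rmin d1 d2) ts).
    pose proof (Rmin_r (Rmin d1 d2) ts). pose proof (Rmin_l d1 d2). pose proof (Rmin_r d1 d2).
    assert (0 < Rmin (Rmin d1 d2) ts) by (repeat apply Rmin_pos; lra). lra. }
  assert (Hg : forall s, ts - h < s < ts -> - d - 1/4 <= g s).
  { intros s Hs.
    assert (Hbs : Rabs (b s xs ys zs - d) < 1/4).
    { apply (Hb s xs ys zs); try (rewrite Rminus_diag, Rabs_R0; apply cond_pos);
        [lra | apply Rabs_def1; lra]. }
    apply Rabs_def2 in Hbs. pose proof (b_ge s xs ys zs ltac:(lra)). lra. }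
  assert (Hgint : (- d - 1/4) * (ts - (ts - h)) <= RInt g (ts - h) ts).
  { apply RInt_ge_const; [lra | | exact Hg].
    apply (ex_RInt_inner g 0 ts); [lra | lra | apply g_int; lra]. }
  pose proof (G_increment (ts - h) ts ltac:(lra) ltac:(lra)) as HG.
  specialize (Hw h ltac:(lra)).
  specialize (Hmin (ts - h) xs ys zs ltac:(lra)). unfold phi in Hmin.
  (* From [ts - h] to [ts], [w] rises by at least [h (d - 1/4)] while [G] rises by at
     least [h (3/4 - d)], so [phi (ts - h) < phi ts]. *)
  nra.
Qed.

Theorem minimum_principle :
  exists m, forall t x y z, 0 <= t < T -> m <= w t x y z + (RInt g 0 t + t).
Proof.
  destruct (periodic_attains_min phi 0 0 (Rle_refl 0) phi_periodic
      (phi_cont 0 (conj (Rle_refl 0) T_pos)))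
    as (t0 & x0 & y0 & z0 & _ & Hmin0).
  exists (phi t0 x0 y0 z0). intros t x y z Ht.
  destruct (periodic_attains_min phi 0 t (proj1 Ht) phi_periodic (phi_cont t Ht))
    as (ts & xs & ys & zs & Hts & Hmin).
  destruct (Rle_lt_or_eq_dec 0 ts (proj1 Hts)) as [Hts0 | <-].
  - exfalso. apply (phi_no_min_at_positive_time t ts xs ys zs); [lra | lra | exact Hmin].
  - apply Rle_trans with (phi 0 xs ys zs); [apply Hmin0; lra | apply Hmin; lra].
Qed.

End MinimumPrinciple.

Lemma dx_mult j (f g : sf) t x y z : ex_dx j f t x y z -> ex_dx j g t x y z ->
  dx j (fun t x y z => f t x y z * g t x y z) t x y z =
  dx j f t x y z * g t x y z + f t x y z * dx j g t x y z.
Proof. destruct j as [|[|j]]; apply Derive_mult. Qed.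

Lemma Derive_eq0_at_log_min (sg : R) (h : R -> R) (c : R) : sg = 1 \/ sg = -1 ->
  0 < h c -> ex_derive h c -> (forall s, sg * ln (h c) <= sg * ln (h s)) -> Derive h c = 0.
Proof.
  intros Hsg Hc Hex Hmin.
  assert (Hd : is_derive (fun s => sg * ln (h s)) c (sg * (Derive h c * / h c))).
  { apply is_derive_scal, (is_derive_comp ln h c);
      [apply is_derive_ln, Hc | apply Derive_correct, Hex]. }
  apply is_derive_min_eq0 in Hd; [|exact Hmin].
  pose proof (Rinv_0_lt_compat _ Hc). destruct Hsg as [-> | ->]; nra.
Qed.

Section LogDensity.

Variables (T : R) (rho : sf) (u : vf).
Hypothesis T_pos : 0 < T.
Hypothesis rho_periodic : periodic rho.
Hypothesis rho_pos : forall t x y z, 0 <= t < T -> 0 < rho t x y z.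
Hypothesis rho_cont : cont_on (fun t => 0 <= t < T) rho.
Hypothesis rho_dx_ex : forall j, (j < 3)%nat ->
  forall t x y z, 0 <= t < T -> ex_dx j rho t x y z.
Hypothesis u_dx_ex : forall j, (j < 3)%nat ->
  forall t x y z, 0 <= t < T -> ex_dx j (u j) t x y z.
Hypothesis u_dx_cont : forall j, (j < 3)%nat -> cont_on (fun t => 0 <= t < T) (dx j (u j)).
Hypothesis rho_dt_ex : forall t x y z, 0 < t < T -> ex_derive (fun s => rho s x y z) t.
Hypothesis mass_conservation : forall t x y z, 0 < t < T ->
  dt rho t x y z + sum3 (fun j => dx j (fun t x y z => rho t x y z * u j t x y z) t x y z) = 0.

Variable sg : R.
Hypothesis sg_unit : sg = 1 \/ sg = -1.

Lemma rho_dx_eq0_at_log_min t x y z : 0 <= t < T ->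
  (forall x' y' z', sg * ln (rho t x y z) <= sg * ln (rho t x' y' z')) ->
  forall j, (j < 3)%nat -> dx j rho t x y z = 0.
Proof.
  intros Ht Hmin j Hj. pose proof (rho_dx_ex j Hj t x y z Ht) as Hex.
  destruct j as [|[|[|j]]]; [| | | lia];
    apply (Derive_eq0_at_log_min sg); auto; intros s; apply Hmin.
Qed.

Lemma rho_dt_at_critical t x y z : 0 < t < T ->
  (forall j, (j < 3)%nat -> dx j rho t x y z = 0) ->
  dt rho t x y z = - rho t x y z * divu u t x y z.
Proof.
  intros Ht Hgrad. pose proof (mass_conservation t x y z Ht) as Hmass.
  assert (Ht0 : 0 <= t < T) by lra.
  unfold sum3 in Hmass.
  rewrite !dx_mult, !Hgrad in Hmass by (auto; lia).
  unfold divu, sum3. lra.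
Qed.

Lemma log_density_dt_at_min t x y z : 0 < t < T ->
  (forall x' y' z', sg * ln (rho t x y z) <= sg * ln (rho t x' y' z')) ->
  is_derive (fun s => sg * ln (rho s x y z)) t (- sg * divu u t x y z).
Proof.
  intros Ht Hmin. assert (Ht0 : 0 <= t < T) by lra.
  pose proof (rho_pos t x y z Ht0) as Hr.
  pose proof (rho_dt_at_critical t x y z Ht (rho_dx_eq0_at_log_min t x y z Ht0 Hmin)) as Hdt.
  replace (- sg * divu u t x y z) with (sg * (dt rho t x y z * / rho t x y z))
    by (rewrite Hdt; field; lra).
  apply is_derive_scal, (is_derive_comp ln (fun s => rho s x y z));
    [apply is_derive_ln, Hr | apply Derive_correct, rho_dt_ex, Ht].
Qed.

Lemma log_density_cont : cont_on (fun t => 0 <= t < T) (fun t x y z => sg * ln (rho t x y z)).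
Proof.
  apply (cont_on_comp _ (fun r => sg * ln r)); [|exact rho_cont].
  intros t x y z Ht. apply continuity_pt_filterlim, (ex_derive_continuous (fun r => sg * ln r)).
  pose proof (rho_pos t x y z Ht). auto_derive. lra.
Qed.

Lemma neg_divu_cont : cont_on (fun t => 0 < t < T) (fun t x y z => - sg * divu u t x y z).
Proof.
  apply (cont_on_sub (fun t => 0 <= t < T)); [intros t Ht; lra|].
  apply (cont_on_comp _ (fun r => - sg * r)).
  - intros. apply continuity_pt_filterlim, (ex_derive_continuous (fun r => - sg * r)).
    auto_derive. exact I.
  - unfold divu, sum3.
    repeat apply cont_on_plus; apply u_dx_cont; lia.
Qed.

Theorem log_density_lower_bound (g : R -> R) :
  (forall t, 0 <= t < T -> ex_RInt g 0 t) ->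
  (forall t x y z, 0 < t < T -> Rabs (divu u t x y z) <= g t) ->
  exists m, forall t x y z, 0 <= t < T -> m <= sg * ln (rho t x y z) + (RInt g 0 t + t).
Proof.
  intros g_int divu_le.
  apply (minimum_principle T (fun t x y z => sg * ln (rho t x y z))
           (fun t x y z => - sg * divu u t x y z) g T_pos).
  - intros t x y z. destruct (rho_periodic t x y z) as (-> & -> & ->). auto.
  - exact log_density_cont.
  - exact neg_divu_cont.
  - exact g_int.
  - intros t x y z Ht. pose proof (divu_le t x y z Ht).
    pose proof (Rle_abs (divu u t x y z)). pose proof (Rle_abs (- divu u t x y z)).
    rewrite Rabs_Ropp in *. destruct sg_unit as [-> | ->]; lra.
  - exact log_density_dt_at_min.
Qed.

End LogDensity.

Lemma normD_le_LinfD (u : vf) t x y z : is_finite (LinfD u t) ->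
  normD u t x y z <= real (LinfD u t).
Proof.
  intros Hf.
  destruct (Lub_Rbar_correct (fun r => exists x y z, r = normD u t x y z)) as [Hub _].
  specialize (Hub _ (ex_intro _ x (ex_intro _ y (ex_intro _ z eq_refl)))).
  unfold LinfD in Hf |- *. rewrite <- Hf in Hub. exact Hub.
Qed.

Lemma trace_sq_le (D : nat -> nat -> R) :
  (D 0%nat 0%nat + D 1%nat 1%nat + D 2%nat 2%nat) ^ 2
  <= 3 * sum3 (fun i => sum3 (fun j => D i j ^ 2)).
Proof.
  unfold sum3.
  pose proof (pow2_ge_0 (D 0%nat 1%nat)). pose proof (pow2_ge_0 (D 0%nat 2%nat)).
  pose proof (pow2_ge_0 (D 1%nat 0%nat)). pose proof (pow2_ge_0 (D 1%nat 2%nat)).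
  pose proof (pow2_ge_0 (D 2%nat 0%nat)). pose proof (pow2_ge_0 (D 2%nat 1%nat)).
  pose proof (pow2_ge_0 (D 0%nat 0%nat - D 1%nat 1%nat)).
  pose proof (pow2_ge_0 (D 0%nat 0%nat - D 2%nat 2%nat)).
  pose proof (pow2_ge_0 (D 1%nat 1%nat - D 2%nat 2%nat)).
  nra.
Qed.

Lemma Rabs_divu_le (u : vf) t x y z : is_finite (LinfD u t) ->
  Rabs (divu u t x y z) <= / 2 + 3 / 2 * real (LinfD u t) ^ 2.
Proof.
  intros Hf. set (D := fun i j => Dsym u i j t x y z).
  assert (Ediv : divu u t x y z = D 0%nat 0%nat + D 1%nat 1%nat + D 2%nat 2%nat)
    by (unfold D, divu, Dsym, sum3; field).
  assert (Enorm : normD u t x y z ^ 2 = sum3 (fun i => sum3 (fun j => D i j ^ 2))).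
  { unfold normD. simpl. rewrite Rmult_1_r. apply sqrt_sqrt.
    unfold sum3. repeat apply Rplus_le_le_0_compat; apply pow2_ge_0. }
  pose proof (trace_sq_le D) as Htr. rewrite <- Ediv, <- Enorm in Htr.
  pose proof (normD_le_LinfD u t x y z Hf).
  assert (0 <= normD u t x y z) by apply sqrt_pos.
  assert (Hamgm : Rabs (divu u t x y z) <= (1 + divu u t x y z ^ 2) / 2).
  { rewrite <- (pow2_abs (divu u t x y z)).
    pose proof (pow2_ge_0 (Rabs (divu u t x y z) - 1)). nra. }
  nra.
Qed.

Lemma bounds_of_ln_bounds (r a b : R) : 0 < r -> a <= ln r <= b ->
  / (exp (- a) + exp b) <= r <= exp (- a) + exp b.
Proof.
  intros Hr [Ha Hb]. rewrite <- (exp_ln r Hr).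
  pose proof (exp_pos (- a)). pose proof (exp_pos b).
  split.
  - apply Rle_trans with (exp a).
    + rewrite <- (Rinv_inv (exp a)), <- exp_Ropp. apply Rinv_le_contravar; lra.
    + destruct (Rle_lt_or_eq_dec _ _ Ha) as [Hlt | ->]; [left; apply exp_increasing, Hlt | lra].
  - apply Rle_trans with (exp b); [|lra].
    destruct (Rle_lt_or_eq_dec _ _ Hb) as [Hlt | ->]; [left; apply exp_increasing, Hlt | lra].
Qed.

Theorem lemma5p1 (gam del alp A bet : R)
  (rho0 : R -> R -> R -> R) (u0 : nat -> R -> R -> R -> R)
  (rho : sf) (u : vf) (Tbar C0 : R) :
  1 < gam -> 0 < del < 1 -> 0 < alp -> 0 < A ->
  bet = 2 * alp * (del - 1) -> 0 <= alp + bet ->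
  (forall x y z, 0 < rho0 x y z) ->
  0 < Tbar ->
  cns_solution gam del alp A bet rho0 u0 Tbar rho u ->
  (* uniqueness on every [0,T], T <= Tbar *)
  (forall T rho' u', 0 < T <= Tbar ->
     cns_solution gam del alp A bet rho0 u0 T rho' u' ->
     forall t x y z, 0 <= t < T ->
       rho' t x y z = rho t x y z /\
       (forall i, (i < 3)%nat -> u' i t x y z = u i t x y z)) ->
  (* Tbar is the maximal existence time *)
  ~ (exists T' rho' u', Tbar < T' /\
       cns_solution gam del alp A bet rho0 u0 T' rho' u') ->
  (* lim_{T -> Tbar} int_0^T ||D(u)(t)||_{L^oo}^2 dt = C0 < oo *)
  (forall t, 0 <= t < Tbar -> is_finite (LinfD u t)) ->
  (forall T, 0 <= T < Tbar -> ex_RInt (fun t => (real (LinfD u t)) ^ 2) 0 T) ->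
  filterlim (fun T => RInt (fun t => (real (LinfD u t)) ^ 2) 0 T)
    (at_left Tbar) (locally C0) ->
  exists C, 0 < C /\
    forall t x y z, 0 <= t < Tbar -> / C <= rho t x y z <= C.
Proof.
  intros _ _ _ _ _ _ _ HT Hsol _ _ Hfin Hq_int Hlim.
  destruct Hsol as (Hper & _ & Hpos & _ & _ & Hcr & _ & Hdr & Hdu & Hexdt & _ & _ & _ & Hmass & _).
  set (q := fun t => real (LinfD u t) ^ 2) in Hq_int, Hlim.
  set (g := fun t => / 2 + 3 / 2 * q t).
  assert (g_int : forall t, 0 <= t < Tbar -> ex_RInt g 0 t)
    by (intros; apply ex_RInt_affine, Hq_int; lra).
  assert (divu_le : forall t x y z, 0 < t < Tbar -> Rabs (divu u t x y z) <= g t)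
    by (intros; apply Rabs_divu_le, Hfin; lra).
  set (K := Tbar / 2 + 3 / 2 * C0 + Tbar).
  assert (G_le : forall t, 0 <= t < Tbar -> RInt g 0 t + t <= K).
  { intros t Ht. unfold g. rewrite RInt_affine by (apply Hq_int; lra).
    pose proof (RInt_le_left_limit q Tbar C0 (fun s => pow2_ge_0 _) Hq_int Hlim t Ht).
    unfold K. lra. }
  pose proof (fun sg Hsg => log_density_lower_bound Tbar rho u HT Hper Hpos Hcr
    (fun j Hj => proj1 (Hdr j Hj)) (fun j Hj => proj1 (Hdu j j Hj Hj))
    (fun j Hj => proj2 (Hdu j j Hj Hj)) Hexdt Hmass sg Hsg g g_int divu_le) as Hlower.
  destruct (Hlower 1 (or_introl eq_refl)) as [m1 Hm1].
  destruct (Hlower (-1) (or_intror eq_refl)) as [m2 Hm2].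
  exists (exp (- (m1 - K)) + exp (K - m2)). split.
  - pose proof (exp_pos (- (m1 - K))). pose proof (exp_pos (K - m2)). lra.
  - intros t x y z Ht. apply bounds_of_ln_bounds; [apply Hpos, Ht|].
    specialize (Hm1 t x y z Ht). specialize (Hm2 t x y z Ht). specialize (G_le t Ht).
    lra.
Qed.
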